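(* Consider the following strict partial orders on $P_f(\mathbb{N}^+)$: $A\prec_{gen}B$ iff $A=\emptyset$ and $B\neq\emptyset$; $A\prec_{BFS}B$ iff $umin(A)>umin(B)$; $A\prec_{DFS}B$ iff $umax(A)<umax(B)$; $A\prec_{MNS}B$ iff $A\subsetneq B$; $A\prec_{MCS}B$ iff $|A|<|B|$; $A\prec_{LBFS}B$ iff $umin(B-A)<umin(A-B)$; $A\prec_{LDFS}B$ iff $umax(A-B)<umax(B-A)$. Say that search $S'$ extends search $S$ if for all $A,B$, $A\prec_S B$ implies $A\prec_{S'}B$ (equivalently, for every finite graph $G$ every $\mathrm{TBLS}$-ordering of $G$ for $\prec_{S'}$ is a $\mathrm{TBLS}$-ordering of $G$ for $\prec_S$). Then: BFS, DFS and MNS each extend Generic search ($\prec_{gen}$); LBFS extends BFS; LDFS extends DFS; LBFS, LDFS and MCS each extend MNS.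
   Context: $P_f(\mathbb{N}^+)$ is the set of finite subsets of positive integers; $umin(A)=\min A$ for $A\neq\emptyset$ and $umin(\emptyset)=\infty$; $umax(A)=\max A$ for $A\neq\emptyset$ and $umax(\emptyset)=0$. Given a finite graph $G=(V,E)$ with $n$ vertices, a strict partial order $\prec$ on $P_f(\mathbb{N}^+)$ and an ordering $\tau$ of $V$, $\mathrm{TBLS}(G,\prec,\tau)$ is the procedure: set $label(v)=\emptyset$ for every $v$; for $i=1,\dots,n$: let Eligible be the set of unnumbered vertices $x$ such that there is no unnumbered vertex $y$ with $label(x)\prec label(y)$; let $v$ be the first vertex of Eligible in $\tau$; set $\sigma(i)=v$ ($v$ becomes numbered); for every unnumbered neighbour $w$ of $v$ replace $label(w)$ by $label(w)\cup\{i\}$; output $\sigma$. A TBLS-ordering of $G$ for $\prec$ is any output $\mathrm{TBLS}(G,\prec,\tau)$ over all orderings $\tau$ of $V$. *)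

From HB Require Import structures.
From mathcomp Require Import all_boot finmap.
Set Implicit Arguments.
Unset Strict Implicit.
Unset Printing Implicit Defensive.
Local Open Scope fset_scope.

(* Elements of P_f(N^+) are represented as finite sets of nats {fset nat}
   all of whose elements are positive (see [posset]). *)
Definition posset (A : {fset nat}) : Prop := forall x, x \in A -> (0 < x)%N.

(* N ∪ {∞}: [None] stands for ∞. *)
Definition ltI (a b : option nat) : bool :=
  match a, b with
  | Some x, Some y => (x < y)%N
  | Some _, None => true
  | None, _ => false
  end.

(* umin A = min A for A nonempty, ∞ for A empty. *)
Definition umin (A : {fset nat}) : option nat :=
  if A == fset0 then None
  else Some (foldr minn (head 0 (enum_fset A)) (enum_fset A)).

(* umax A = max A for A nonempty, 0 for A empty. *)
Definition umax (A : {fset nat}) : nat := \max_(x <- enum_fset A) x.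

Definition prec_gen  (A B : {fset nat}) : bool := (A == fset0) && (B != fset0).
Definition prec_BFS  (A B : {fset nat}) : bool := ltI (umin B) (umin A).
Definition prec_DFS  (A B : {fset nat}) : bool := (umax A < umax B)%N.
Definition prec_MNS  (A B : {fset nat}) : bool := A `<` B.
Definition prec_MCS  (A B : {fset nat}) : bool := (#|` A| < #|` B|)%N.
Definition prec_LBFS (A B : {fset nat}) : bool := ltI (umin (B `\` A)) (umin (A `\` B)).
Definition prec_LDFS (A B : {fset nat}) : bool := (umax (A `\` B) < umax (B `\` A))%N.

Definition extends (S S' : {fset nat} -> {fset nat} -> bool) : Prop :=
  forall A B : {fset nat}, posset A -> posset B -> S A B -> S' A B.

From mathcomp Require Import all_boot finmap.

(* A ≺_BFS B holds iff some element of B lies below every element of A, and,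
   for sets of positive integers, A ≺_DFS B holds iff some element of B lies
   above every element of A.  The lexicographic orders make the same
   comparisons between B \ A and A \ B, so each extension amounts to checking
   that a witness for the weaker order is still a witness for the differences;
   when A ⊊ B, any element of B \ A is one, since A \ B is empty. *)

Local Open Scope fset_scope.

Lemma foldr_minn_le (h : nat) (s : seq nat) x : x \in s -> foldr minn h s <= x.
Proof.
elim: s => //= y s IHs; rewrite inE => /predU1P[-> | /IHs le_x].
  exact: geq_minl.
by rewrite geq_min le_x orbT.
Qed.

Lemma foldr_minn_mem (h : nat) (s : seq nat) : foldr minn h s \in h :: s.
Proof.
elim: s => [|y s IHs] /=; first exact: mem_head.
rewrite /minn; case: ifP => _; first by rewrite !inE eqxx orbT.
by move: IHs; rewrite !inE => /orP[] ->; rewrite ?orbT.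
Qed.

Variant umin_spec (A : {fset nat}) : option nat -> Type :=
  | UminNone of A = fset0 : umin_spec A None
  | UminSome m of m \in A & (forall x, x \in A -> m <= x) : umin_spec A (Some m).

Lemma uminP (A : {fset nat}) : umin_spec A (umin A).
Proof.
rewrite /umin; have [-> | A_neq0] := eqVneq A fset0; first exact: UminNone.
have hA : head 0 (enum_fset A) \in enum_fset A.
  have [x] := fset0Pn A A_neq0; rewrite -[x \in A]/(x \in enum_fset A).
  by case: (enum_fset A) => // y s _; apply: mem_head.
apply: UminSome => [|y yA]; last exact: foldr_minn_le.
by move: (foldr_minn_mem (head 0 (enum_fset A)) (enum_fset A)); rewrite inE => /predU1P[->|].
Qed.

Lemma ltI_uminP (A B : {fset nat}) :
  reflect (exists2 b, b \in B & forall a, a \in A -> b < a) (ltI (umin B) (umin A)).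
Proof.
case: uminP => [-> | b bB b_min]; first by right => -[b]; rewrite inE.
case: uminP => [-> | a aA a_min] /=.
  by left; exists b => // a; rewrite inE.
apply: (iffP idP) => [lt_ba | [c cB c_lt]].
  by exists b => // x /a_min; apply: leq_trans.
exact: leq_ltn_trans (b_min c cB) (c_lt a aA).
Qed.

Lemma umax_leqP (A : {fset nat}) m : reflect (forall a, a \in A -> a <= m) (umax A <= m).
Proof. by apply: (iffP (bigmax_leqP_seq _ _ _ _)) => [le_m a aA | le_m a aA _]; apply: le_m. Qed.

Lemma umax_ge (A : {fset nat}) a : a \in A -> a <= umax A.
Proof. exact: (elimT (umax_leqP A (umax A)) (leqnn _)). Qed.

Lemma umax_ltn (A : {fset nat}) n :
  0 < n -> (forall a, a \in A -> a < n) -> umax A < n.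
Proof. by case: n => // n _ lt_n; rewrite ltnS; apply/umax_leqP => a /lt_n. Qed.

Lemma ltn_umaxP (A : {fset nat}) n : reflect (exists2 a, a \in A & n < a) (n < umax A).
Proof.
apply: (iffP idP) => [lt_n | [a aA lt_na]].
  apply/hasP/negPn/negP => /hasPn le_n; move: lt_n; rewrite ltnNge => /negP; apply.
  by apply/umax_leqP => a aA; rewrite leqNgt; apply: le_n.
by rewrite (leq_trans lt_na) ?umax_ge.
Qed.

Lemma extends_gen_BFS : extends prec_gen prec_BFS.
Proof.
move=> A B _ _ /andP[/eqP-> /fset0Pn[b bB]].
by apply/ltI_uminP; exists b => // a; rewrite inE.
Qed.

(* Positivity matters here: fset0 ≺_gen [fset 0], but umax fset0 = umax [fset 0]. *)
Lemma extends_gen_DFS : extends prec_gen prec_DFS.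
Proof.
move=> A B _ posB /andP[/eqP-> /fset0Pn[b bB]]; apply/ltn_umaxP.
by exists b => //; apply: umax_ltn (posB b bB) _ => a; rewrite inE.
Qed.

Lemma extends_gen_MNS : extends prec_gen prec_MNS.
Proof. by move=> A B _ _ /andP[/eqP-> B_neq0]; rewrite /prec_MNS fproper0. Qed.

Lemma extends_BFS_LBFS : extends prec_BFS prec_LBFS.
Proof.
move=> A B _ _ /ltI_uminP[b bB b_lt]; apply/ltI_uminP.
have bNA : b \notin A by apply/negP => /b_lt; rewrite ltnn.
by exists b => [|a]; rewrite inE ?bB ?bNA // => /andP[_ /b_lt].
Qed.

Lemma extends_DFS_LDFS : extends prec_DFS prec_LDFS.
Proof.
move=> A B _ _ /ltn_umaxP[b bB lt_b]; apply/ltn_umaxP.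
have bNA : b \notin A by apply/negP => /umax_ge; rewrite leqNgt lt_b.
exists b; first by rewrite inE bNA bB.
apply: umax_ltn (leq_ltn_trans (leq0n _) lt_b) _ => a.
by rewrite inE => /andP[_ /umax_ge/leq_ltn_trans]; apply.
Qed.

Lemma fsetD_proper (A B : {fset nat}) : A `<` B -> A `\` B = fset0 /\ B `\` A != fset0.
Proof. by rewrite fproperE => /andP[sAB nsBA]; split; [apply/eqP|]; rewrite fsetD_eq0. Qed.

Lemma extends_MNS_LBFS : extends prec_MNS prec_LBFS.
Proof.
move=> A B _ _; rewrite /prec_LBFS => /fsetD_proper[-> /fset0Pn[b bBA]].
by apply/ltI_uminP; exists b => // a; rewrite inE.
Qed.

Lemma extends_MNS_LDFS : extends prec_MNS prec_LDFS.
Proof.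
move=> A B _ posB; rewrite /prec_LDFS => /fsetD_proper[-> /fset0Pn[b bBA]]; apply/ltn_umaxP.
have bB : b \in B by move: bBA; rewrite inE => /andP[].
by exists b => //; apply: umax_ltn (posB b bB) _ => a; rewrite inE.
Qed.

Lemma extends_MNS_MCS : extends prec_MNS prec_MCS.
Proof. by move=> A B _ _; apply: fproper_ltn_card. Qed.

Theorem theorem8 :
  extends prec_gen prec_BFS /\
  extends prec_gen prec_DFS /\
  extends prec_gen prec_MNS /\
  extends prec_BFS prec_LBFS /\
  extends prec_DFS prec_LDFS /\
  extends prec_MNS prec_LBFS /\
  extends prec_MNS prec_LDFS /\
  extends prec_MNS prec_MCS.
Proof.
by do !split; [ exact: extends_gen_BFS | exact: extends_gen_DFS
  | exact: extends_gen_MNS | exact: extends_BFS_LBFS | exact: extends_DFS_LDFS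
  | exact: extends_MNS_LBFS | exact: extends_MNS_LDFS | exact: extends_MNS_MCS ].
Qed.
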